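(* Let $G$ be a non decreasing function on $[0,\infty)$ and let $X$ be a real random variable with symmetric law. Let $(X_n)_{n\ge1}$ be i.i.d. copies of $X$, $S_n:=X_1+\cdots+X_n$, $L_1:=\sup\big(\{0\}\cup\{n\ge1:\ |S_n/n|\ge1\}\big)$ and $S(X,G,1/8):=\sum_{n\ge1}n^{-1}G(n)\,P[|S_n/n|\ge 1/8]$. Then $$E[G(L_1)]\le G(0)+12\,S(X,G,1/8).$$
   Context: A random variable $X$ has symmetric law if $X$ and $-X$ have the same law. *)

From HB Require Import structures.
From mathcomp Require Import all_boot all_order all_algebra.
From mathcomp Require Import all_classical all_reals all_analysis.
Set Implicit Arguments. Unset Strict Implicit. Unset Printing Implicit Defensive.
Import Order.TTheory GRing.Theory Num.Theory.
Local Open Scope classical_set_scope.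
Local Open Scope ring_scope.

(* Random variables X n are indexed from 0: X_1, X_2, ... of the paper are
   X 0, X 1, ...; so S_n = X 0 + ... + X (n-1). *)

Definition mutually_independent d (T : measurableType d) (R : realType)
  (P : probability T R) (X : nat -> T -> R) : Prop :=
  forall (I : seq nat) (B : nat -> set R),
    uniq I -> (forall i, i \in I -> measurable (B i)) ->
    P (\bigcap_(i in [set` I]) (X i @^-1` B i)) =
    (\prod_(i <- I) P (X i @^-1` B i))%E.

Definition same_law d (T : measurableType d) (R : realType)
  (P : probability T R) (Y Z : T -> R) : Prop :=
  forall B : set R, measurable B -> P (Y @^-1` B) = P (Z @^-1` B).

Definition symmetric_law d (T : measurableType d) (R : realType)
  (P : probability T R) (Y : T -> R) : Prop :=
  same_law P Y (fun w => - Y w).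

Definition partial_sum T (R : realType) (X : nat -> T -> R) (n : nat) (w : T) : R :=
  \sum_(i < n) X i w.

Definition L1 T (R : realType) (X : nat -> T -> R) (w : T) : \bar R :=
  ereal_sup [set (n%:R)%:E | n in
    [set n : nat | n = 0%N \/ (0 < n)%N /\ 1 <= `|partial_sum X n w / n%:R| ]].

(* extension of G to [0, +oo] by G(+oo) = sup_n G(n) = lim_n G(n)
   (G non-decreasing); the value at -oo is irrelevant (L1 >= 0). *)
Definition Gext (R : realType) (G : R -> R) (x : \bar R) : \bar R :=
  match x with
  | r%:E => (G r)%:E
  | +oo%E => ereal_sup (range (fun n : nat => (G n%:R)%:E))
  | -oo%E => (G 0)%:E
  end.

Definition Ssum d (T : measurableType d) (R : realType)
  (P : probability T R) (X : nat -> T -> R) (G : R -> R) (eps : R) : \bar R :=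
  (\sum_(1 <= n <oo)
     ((n%:R)^-1 * G n%:R)%:E * P [set w | (eps <= `|partial_sum X n w / n%:R|)%R])%E.

(* Write S_k for the partial sums and M_j for the event that
   max_{k <= 2^(j+1)} |S_k| >= 2^j.  If L_1 = n with 2^j <= n < 2^(j+1), then
   |S_n| >= n >= 2^j, so M_j holds and G(n) <= G(2^(j+1)); hence pointwise
   G(L_1) <= G(0) + sum_j G(2^(j+1)) 1_{M_j}.
   Both inequalities of Levy type come from a reflection argument: if F
   is determined by X_1, ..., X_k and |S_k| >= c on F, the increment S_N - S_k
   is independent of F and symmetric, so it has the sign of S_k with
   probability at least 1/2, whence P(F) <= 2 P(F /\ |S_N| >= c).  This gives
   P(M_j) <= 2 P(|S_(2^(j+1))| >= 2^j) <= 4 P(|S_n| >= 2^j) <= 4 P(|S_n/n| >= 1/8)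
   for every n in the next dyadic block 2^(j+1) <= n < 2^(j+2).  Averaging over
   that block, where 1/n > 2^-(j+2) and G(n) >= G(2^(j+1)), bounds
   G(2^(j+1)) P(M_j) by 8 times the contribution of the block to S(X,G,1/8). *)

From HB Require Import structures.
From mathcomp Require Import all_boot all_order all_algebra.
From mathcomp Require Import all_classical all_reals all_analysis.
From mathcomp Require Import measurable_realfun.
From mathcomp Require Import ring lra.
Set Implicit Arguments.
Unset Strict Implicit.
Unset Printing Implicit Defensive.
Import Order.TTheory GRing.Theory Num.Theory.
Local Open Scope classical_set_scope.
Local Open Scope ring_scope.

Section real_probability.
Context d (T : measurableType d) (R : realType) (P : probability T R).

(* Probabilities as reals, so that lra and nra apply to them. *)
Definition pr (A : set T) : R := fine (P A).

Lemma prE A : measurable A -> P A = (pr A)%:E.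
Proof. by move=> mA; rewrite /pr fineK //; exact: fin_num_measure. Qed.

Lemma pr_ge0 A : 0 <= pr A.
Proof. by rewrite /pr fine_ge0 // measure_ge0. Qed.

Lemma pr_setT : pr setT = 1.
Proof. by rewrite /pr probability_setT. Qed.

Lemma le_pr A B : measurable A -> measurable B -> A `<=` B -> pr A <= pr B.
Proof.
by move=> mA mB AB; rewrite -lee_fin -!prE //; apply: le_measure => //; rewrite inE.
Qed.

Lemma pr_setU A B : measurable A -> measurable B -> A `&` B = set0 ->
  pr (A `|` B) = pr A + pr B.
Proof.
move=> mA mB AB; apply: EFin_inj.
by rewrite EFinD -!prE ?measureU //; exact: measurableU.
Qed.

Lemma pr_setC A : measurable A -> pr (~` A) = 1 - pr A.
Proof.
move=> mA; apply: EFin_inj.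
by rewrite -prE ?probability_setC ?prE //; exact: measurableC.
Qed.

Lemma pr_setID A B : measurable A -> measurable B ->
  pr B = pr (B `&` A) + pr (B `&` ~` A).
Proof.
move=> mA mB; rewrite -pr_setU; first by rewrite -setIUr setUv setIT.
- exact: measurableI.
- by apply: measurableI => //; exact: measurableC.
- by rewrite setIACA setIid setICr setI0.
Qed.

Lemma pr_setIM A B : P (A `&` B) = (P A * P B)%E -> measurable A -> measurable B ->
  pr (A `&` B) = pr A * pr B.
Proof.
move=> AB mA mB; apply: EFin_inj.
by rewrite EFinM -!prE //; exact: measurableI.
Qed.

Lemma g_sigma_indep (G : set (set T)) (B : set T) : measurable B ->
  setI_closed G -> G `<=` measurable ->
  (forall A, G A -> P (A `&` B) = (P A * P B)%E) ->
  forall A, <<s G >> A -> P (A `&` B) = (P A * P B)%E.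
Proof.
move=> mB GI Gm GB.
have sGm : <<s G >> `<=` measurable.
  by apply: smallest_sub => //; exact: sigma_algebra_measurable.
apply: (@dynkin_induction _ (g_sigma_algebraType G) G) => //.
- by rewrite setTI probability_setT mul1e.
- move=> A /sGm mA AB; have mCA : @measurable d T (~` A) by exact: measurableC.
  rewrite setIC !prE //; last exact: measurableI.
  move: AB; rewrite !prE //; last exact: measurableI.
  rewrite -!EFinM => -[AB]; congr EFin.
  have := pr_setID mA mB; rewrite (setIC B A) AB pr_setC //; lra.
- move=> F mF tF FB; have {}mF n : @measurable d T (F n) := sGm _ (mF n).
  rewrite setI_bigcupl measure_bigcup //; last first.
    move=> i j _ _ [x [[Fi _] [Fj _]]]; apply: tF => //; by exists x.
    by move=> i _; exact: measurableI.
  rewrite measure_bigcup // (eq_eseriesr (fun n _ => FB n)).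
  rewrite (prE mB) muleC -nneseriesZl; last by move=> *; exact: measure_ge0.
  by apply: eq_eseriesr => i _; rewrite muleC.
Qed.

End real_probability.

Lemma ler_norm_add_mul_ge0 (R : realDomainType) (x y : R) :
  0 <= x * y -> `|x| <= `|x + y|.
Proof. by move=> xy; rewrite -(@ler_pXn2r _ 2) ?nnegrE // !real_normK ?num_real //; nra. Qed.

Lemma ler_norm_divn (R : realFieldType) (c x : R) (n : nat) : (0 < n)%N ->
  (c <= `|x / n%:R|) = (c * n%:R <= `|x|).
Proof. by move=> n0; rewrite normrM normfV (@ger0_norm _ n%:R) // ler_pdivlMr ?ltr0n. Qed.

Lemma measurable_set_ler d (T : measurableType d) (R : realType) (f g : T -> R) :
  measurable_fun setT f -> measurable_fun setT g -> measurable [set w | f w <= g w].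
Proof.
move=> mf mg; have := measurable_fun_ler mf mg measurableT (I : measurable [set true]).
by rewrite setTI.
Qed.

Lemma measurable_set_abs_ge d (T : measurableType d) (R : realType) (f : T -> R) (c : R) :
  measurable_fun setT f -> measurable [set w | c <= `|f w|].
Proof.
move=> mf; apply: measurable_set_ler; first exact: measurable_cst.
by apply: measurableT_comp => //; exact: normr_measurable.
Qed.

Section independent_blocks.
Context d (T : measurableType d) (R : realType) (P : probability T R).
Variable Xs : nat -> {RV P >-> R}.
Hypothesis Xs_indep : mutually_independent P (fun n => Xs n).

Definition cylinders (I : seq nat) : set (set T) :=
  [set A | exists2 B : nat -> set R, (forall i, measurable (B i)) &
     A = \bigcap_(i in [set` I]) (Xs i @^-1` B i)].

Definition block_sigma I := g_sigma_algebraType (cylinders I).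

Lemma cylinders_setI_closed I : setI_closed (cylinders I).
Proof.
move=> _ _ [B mB ->] [B' mB' ->]; exists (fun i => B i `&` B' i).
  by move=> i; exact: measurableI.
by rewrite -bigcapI.
Qed.

Lemma cylinders_measurable I : cylinders I `<=` measurable.
Proof.
move=> _ [B mB ->]; have [->|/set0P I0] := eqVneq [set` I] set0.
  by rewrite bigcap_set0.
by apply: bigcap_measurable => // i _; exact: measurable_funPTI.
Qed.

Lemma cylinders_sigma_measurable I : <<s cylinders I >> `<=` measurable.
Proof.
apply: smallest_sub; first exact: sigma_algebra_measurable.
exact: cylinders_measurable.
Qed.

Section disjoint_blocks.
Variables I J : seq nat.
Hypotheses (I_uniq : uniq I) (J_uniq : uniq J) (IJ : {in I, forall i, i \notin J}).

Lemma cylinders_indep A C : cylinders I A -> cylinders J C ->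
  P (A `&` C) = (P A * P C)%E.
Proof.
move=> [B mB ->] [B' mB' ->].
have JI : {in J, forall i, i \notin I} by move=> i; apply: contraL => /IJ.
pose D i := if i \in I then B i else B' i.
have -> : \bigcap_(i in [set` I]) (Xs i @^-1` B i) `&`
          \bigcap_(i in [set` J]) (Xs i @^-1` B' i) =
          \bigcap_(i in [set` I ++ J]) (Xs i @^-1` D i).
  apply/seteqP; split=> [w [wI wJ] i /=|w wIJ].
    rewrite mem_cat /D => /orP[iI|iJ]; first by rewrite iI; exact: wI.
    by rewrite (negbTE (JI i iJ)); exact: wJ.
  split=> i /= iK; have := wIJ i; rewrite /= mem_cat iK ?orbT /D => /(_ isT).
    by rewrite iK.
  by rewrite (negbTE (JI i iK)).
rewrite Xs_indep; last 2 first.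
- by rewrite cat_uniq I_uniq J_uniq andbT; apply/hasPn.
- by move=> i _; rewrite /D; case: ifP.
rewrite big_cat /= !Xs_indep //; congr (_ * _)%E; apply: eq_big_seq => i iK.
  by rewrite /D iK.
by rewrite /D (negbTE (JI i iK)).
Qed.

Lemma cylinders_sigma_indep A C : <<s cylinders I >> A -> <<s cylinders J >> C ->
  P (A `&` C) = (P A * P C)%E.
Proof.
move=> sA sC; rewrite setIC muleC.
apply: (g_sigma_indep (cylinders_sigma_measurable sA) _ _ _ sC).
- exact: cylinders_setI_closed.
- exact: cylinders_measurable.
move=> C' cC'; rewrite setIC muleC.
apply: (g_sigma_indep (cylinders_measurable cC') _ _ _ sA).
- exact: cylinders_setI_closed.
- exact: cylinders_measurable.
by move=> A' cA'; exact: cylinders_indep.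
Qed.

End disjoint_blocks.

Lemma block_sigma_measurable_Xs I i : i \in I ->
  measurable_fun [set: block_sigma I] (fun w => Xs i w).
Proof.
move=> iI _ Y mY; rewrite setTI; apply: sub_sigma_algebra.
exists (fun j => if j == i then Y else setT) => [j|]; first by case: ifP.
apply/seteqP; split=> [w Yw j _ /=|w wY]; first by case: ifP => // /eqP ->.
by have := wY i iI; rewrite /= eqxx.
Qed.

Lemma block_sigma_measurable_sum I (J : seq nat) : {subset J <= I} ->
  measurable_fun [set: block_sigma I] (fun w => \sum_(i <- J) Xs i w).
Proof.
move=> JI; pose Y i : block_sigma I -> R :=
  if i \in I then fun w => Xs i w else cst 0.
rewrite (_ : (fun w => _) = fun w => \sum_(i <- J) Y i w).
  apply: measurable_sum => i; rewrite /Y; case: ifP => iI.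
    exact: block_sigma_measurable_Xs.
  exact: measurable_cst.
by apply: funext => w; apply: eq_big_seq => i /JI iI; rewrite /Y iI.
Qed.

Lemma block_sigma_preimage I (f : block_sigma I -> R) (B : set R) :
  measurable_fun setT f -> measurable B -> <<s cylinders I >> (f @^-1` B).
Proof. by move=> mf mB; have := mf measurableT B mB; rewrite setTI. Qed.

End independent_blocks.

Section symmetric_laws.
Context d (T : measurableType d) (R : realType) (P : probability T R).

Lemma eq_law_pi d' (T' : measurableType d') (G : set (set T')) (f g : T -> T') :
  @measurable _ T' = <<s G >> -> setI_closed G ->
  measurable_fun setT f -> measurable_fun setT g ->
  (forall C, G C -> P (f @^-1` C) = P (g @^-1` C)) ->
  forall C, measurable C -> P (f @^-1` C) = P (g @^-1` C).
Proof.
move=> mG GI mf mg fg C mC.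
have mpf S : measurable S -> measurable (f @^-1` S).
  by move=> mS; rewrite -[X in measurable X]setTI; exact: mf.
have mpg S : measurable S -> measurable (g @^-1` S).
  by move=> mS; rewrite -[X in measurable X]setTI; exact: mg.
apply: (dynkin_induction (P := fun C => P (f @^-1` C) = P (g @^-1` C)) mG GI);
  rewrite -?mG //.
- move=> S mS fgS; rewrite -!preimage_setC.
  by rewrite (probability_setC P (mpf _ mS)) (probability_setC P (mpg _ mS)) fgS.
- move=> F mF tF fgF; rewrite !preimage_bigcup !measure_bigcup //.
  + by apply: eq_eseriesr => i _; exact: fgF.
  + by move=> i _; exact: mpg.
  + by move=> i j _ _ [w [Fi Fj]]; apply: tF => //; exists (g w).
  + by move=> i _; exact: mpf.
  + by move=> i j _ _ [w [Fi Fj]]; apply: tF => //; exists (f w).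
Qed.

Lemma symmetric_law_same_law (Y Z : T -> R) :
  same_law P Y Z -> symmetric_law P Z -> symmetric_law P Y.
Proof.
move=> YZ Zsym C mC; have mNC : measurable ((fun x : R => - x) @^-1` C).
  by rewrite -[X in measurable X]setTI; exact: oppr_measurable.
by rewrite YZ // Zsym //; exact: esym (YZ _ mNC).
Qed.

Lemma symmetric_lawD (U V : T -> R) :
  measurable_fun setT U -> measurable_fun setT V ->
  (forall A B, measurable A -> measurable B ->
     P (U @^-1` A `&` V @^-1` B) = (P (U @^-1` A) * P (V @^-1` B))%E) ->
  symmetric_law P U -> symmetric_law P V -> symmetric_law P (fun w => U w + V w).
Proof.
move=> mU mV UV Usym Vsym C mC.
have mN : measurable_fun setT (fun x : R => - x).
  exact: oppr_measurable.
have mNA A : measurable A -> measurable ((fun x : R => - x) @^-1` A).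
  by move=> mA; rewrite -[X in measurable X]setTI; exact: mN.
have madd : measurable ((fun p : R * R => p.1 + p.2) @^-1` C).
  rewrite -[X in measurable X]setTI.
  exact: measurable_funD measurable_fst measurable_snd _ _ mC.
have -> : (fun w => - (U w + V w)) @^-1` C =
    (fun w => (- U w, - V w)) @^-1` ((fun p : R * R => p.1 + p.2) @^-1` C).
  by apply/seteqP; split=> w /=; rewrite opprD.
have -> : (fun w => U w + V w) @^-1` C =
    (fun w => (U w, V w)) @^-1` ((fun p : R * R => p.1 + p.2) @^-1` C) by [].
apply: (eq_law_pi (measurable_prod_measurableType _ _)) => //.
- move=> _ _ [A mA [B mB <-]] [A' mA' [B' mB' <-]]; rewrite -setXI.
  by exists (A `&` A'); [exact: measurableI|exists (B `&` B'); [exact: measurableI|]].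
- exact: measurable_fun_pair.
- by apply: measurable_fun_pair; apply: measurableT_comp.
move=> _ [A mA [B mB <-]].
rewrite -[RHS]/(P (U @^-1` ((fun x => - x) @^-1` A) `&` V @^-1` ((fun x => - x) @^-1` B))).
rewrite -[LHS]/(P (U @^-1` A `&` V @^-1` B)) UV // (UV _ _ (mNA _ mA) (mNA _ mB)).
by rewrite (Usym A mA) (Vsym B mB).
Qed.

Lemma symmetric_law_half (V : T -> R) : measurable_fun setT V -> symmetric_law P V ->
  1 / 2 <= pr P [set w | 0 <= V w] /\ 1 / 2 <= pr P [set w | V w <= 0].
Proof.
move=> mV Vsym; have mVge0 := measurable_set_ler (measurable_cst (0 : R)) mV.
have mVle0 := measurable_set_ler mV (measurable_cst (0 : R)).
have sym : pr P [set w | 0 <= V w] = pr P [set w | V w <= 0].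
  have -> : [set w | 0 <= V w] = V @^-1` `[0, +oo[.
    by apply/seteqP; split=> w; rewrite /= in_itv /= andbT.
  have -> : [set w | V w <= 0] = (fun w => - V w) @^-1` `[0, +oo[.
    by apply/seteqP; split=> w; rewrite /= in_itv /= andbT oppr_ge0.
  by rewrite /pr Vsym //; exact: measurable_itv.
have := pr_setID P mVge0 measurableT; rewrite pr_setT !setTI.
have : pr P (~` [set w | 0 <= V w]) <= pr P [set w | V w <= 0].
  apply: le_pr => //; first exact: measurableC.
  by move=> w /= /negP; rewrite -ltNge => /ltW.
lra.
Qed.

End symmetric_laws.

Lemma partial_sumE T (R : realType) (X : nat -> T -> R) n w :
  partial_sum X n w = \sum_(0 <= i < n) X i w.
Proof. by rewrite /partial_sum big_mkord. Qed.

Section levy_maximal_inequality.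
Context d (T : measurableType d) (R : realType) (P : probability T R).
Variable Xs : nat -> {RV P >-> R}.
Hypothesis Xs_indep : mutually_independent P (fun n => Xs n).
Hypothesis Xs_sym : forall i, symmetric_law P (Xs i).

Local Notation S := (partial_sum (fun n => Xs n)).

Lemma measurable_block_sum m n : measurable_fun setT (fun w => \sum_(m <= i < n) Xs i w).
Proof. by apply: measurable_sum => i; exact: measurable_funPT. Qed.

Lemma measurable_partial_sum n : measurable_fun setT (S n).
Proof.
rewrite (_ : S n = fun w => \sum_(0 <= i < n) Xs i w); first exact: measurable_block_sum.
by apply: funext => w; exact: partial_sumE.
Qed.

Lemma pr_prefix_block_indep k m n A C : (k <= m)%N ->
  <<s cylinders Xs (index_iota 0 k) >> A -> <<s cylinders Xs (index_iota m n) >> C ->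
  pr P (A `&` C) = pr P A * pr P C.
Proof.
move=> km sA sC; apply: pr_setIM; [|exact: cylinders_sigma_measurable sA|exact: cylinders_sigma_measurable sC].
apply: (cylinders_sigma_indep Xs_indep (iota_uniq _ _) (iota_uniq _ _) _ sA sC).
by move=> i; rewrite !mem_index_iota => /andP[_ ik]; rewrite leqNgt (leq_trans ik km).
Qed.

Lemma symmetric_law_block_sum m n : symmetric_law P (fun w => \sum_(m <= i < n) Xs i w).
Proof.
have sym_empty q : (q <= m)%N -> symmetric_law P (fun w => \sum_(m <= i < q) Xs i w).
  by move=> qm C mC; congr (P _); apply/seteqP; split=> w /=; rewrite big_geq // oppr0.
elim: n => [|n IH]; first exact: sym_empty.
have [|mn] := leqP n.+1 m; first exact: sym_empty.
rewrite (_ : (fun w => _) = fun w => \sum_(m <= i < n) Xs i w + Xs n w); last first.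
  by apply: funext => w; rewrite big_nat_recr.
apply: symmetric_lawD => //; first exact: measurable_block_sum.
move=> A B mA mB; apply: (cylinders_sigma_indep Xs_indep (iota_uniq m (n - m)) (isT : uniq [:: n])).
- by move=> i; rewrite mem_index_iota inE => /andP[_ /ltn_eqF ->].
- by apply: block_sigma_preimage mA; exact: block_sigma_measurable_sum.
- by apply: block_sigma_preimage mB; apply: block_sigma_measurable_Xs; exact: mem_head.
Qed.

Lemma block_sigma_measurable_partial_sum n N : (n <= N)%N ->
  measurable_fun [set: block_sigma Xs (index_iota 0 N)] (S n).
Proof.
move=> nN; rewrite (_ : S n = fun w => \sum_(0 <= i < n) Xs i w); last first.
  by apply: funext => w; exact: partial_sumE.
by apply: block_sigma_measurable_sum => i; rewrite !mem_index_iota => /andP[_ /leq_trans]; apply.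
Qed.

Lemma levy_reflection k N c F : (k <= N)%N ->
  <<s cylinders Xs (index_iota 0 k) >> F -> F `<=` [set w | c <= `|S k w|] ->
  pr P F <= 2 * pr P (F `&` [set w | c <= `|S N w|]).
Proof.
move=> kN sF Fc; pose I := index_iota 0 k; pose J := index_iota k N.
pose V w := \sum_(k <= i < N) Xs i w.
have SN w : S N w = S k w + V w by rewrite !partial_sumE -big_cat_nat.
have mSk : measurable_fun [set: block_sigma Xs I] (S k).
  exact: block_sigma_measurable_partial_sum.
have mV : measurable_fun [set: block_sigma Xs J] V by exact: block_sigma_measurable_sum.
pose A := [set w | 0 <= S k w].
have sA : <<s cylinders Xs I >> A := measurable_set_ler (measurable_cst (0 : R)) mSk.
have sFp : <<s cylinders Xs I >> (F `&` A) := @measurableI _ (block_sigma Xs I) _ _ sF sA.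
have sFn : <<s cylinders Xs I >> (F `&` ~` A) :=
  @measurableI _ (block_sigma Xs I) _ _ sF (@measurableC _ (block_sigma Xs I) _ sA).
have sVp : <<s cylinders Xs J >> [set w | 0 <= V w] :=
  measurable_set_ler (measurable_cst (0 : R)) mV.
have sVn : <<s cylinders Xs J >> [set w | V w <= 0] :=
  measurable_set_ler mV (measurable_cst (0 : R)).
have [Vp Vn] := symmetric_law_half (measurable_block_sum k N) (symmetric_law_block_sum k N).
have mFpVp := measurableI _ _ (cylinders_sigma_measurable sFp) (cylinders_sigma_measurable sVp).
have mFnVn := measurableI _ _ (cylinders_sigma_measurable sFn) (cylinders_sigma_measurable sVn).
have split_N : pr P (F `&` A `&` [set w | 0 <= V w]) + pr P (F `&` ~` A `&` [set w | V w <= 0])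
    <= pr P (F `&` [set w | c <= `|S N w|]).
  rewrite -pr_setU //; last by apply/seteqP; split=> // w [[[_ ?] _] [[_ ?] _]].
  apply: le_pr; first exact: measurableU.
    apply: measurableI; first exact: cylinders_sigma_measurable sF.
    exact/measurable_set_abs_ge/measurable_partial_sum.
  move=> w [[[Fw Skp] Vp_w]|[[Fw /negP Skn] Vn_w]]; split=> //=.
    by rewrite SN (le_trans (Fc w Fw)) // ler_norm_add_mul_ge0 // mulr_ge0.
  by rewrite SN (le_trans (Fc w Fw)) // ler_norm_add_mul_ge0 // mulr_le0 // ltW // ltNge.
rewrite (pr_prefix_block_indep (leqnn k) sFp sVp) (pr_prefix_block_indep (leqnn k) sFn sVn) in split_N.
rewrite (pr_setID P (cylinders_sigma_measurable sA) (cylinders_sigma_measurable sF)).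
by have := pr_ge0 P (F `&` A); have := pr_ge0 P (F `&` ~` A); nra.
Qed.

Definition running_max_ge (a : R) (K : nat) : set T :=
  [set w | exists2 k, (0 < k <= K)%N & a <= `|S k w|].

Lemma running_max_ge0 a : running_max_ge a 0 = set0.
Proof. by apply/seteqP; split=> // w [k /andP[k0 /(leq_trans k0)]]. Qed.

Lemma running_max_geS a K :
  running_max_ge a K.+1 = running_max_ge a K `|` [set w | a <= `|S K.+1 w|].
Proof.
apply/seteqP; split=> w /=.
  move=> [k /andP[k0]]; rewrite leq_eqVlt => /orP[/eqP <-|kK] aS; first by right.
  by left; exists k; rewrite ?k0.
move=> [[k /andP[k0 kK] aS]|aS]; first by exists k; rewrite ?k0 ?(leqW kK).
by exists K.+1; rewrite ?leqnn.
Qed.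

Lemma running_max_ge_block_sigma a K N : (K <= N)%N ->
  <<s cylinders Xs (index_iota 0 N) >> (running_max_ge a K).
Proof.
elim: K => [|K IH] KN.
  by rewrite running_max_ge0; exact: (@measurable0 _ (block_sigma Xs _)).
rewrite running_max_geS; apply: (@measurableU _ (block_sigma Xs _)); first exact: IH (ltnW KN).
by apply: (@measurable_set_abs_ge _ (block_sigma Xs _)); exact: block_sigma_measurable_partial_sum.
Qed.

Lemma levy_maximal a N :
  pr P (running_max_ge a N) <= 2 * pr P [set w | a <= `|S N w|].
Proof.
pose AN := [set w | a <= `|S N w|].
have mAN : measurable AN by exact/measurable_set_abs_ge/measurable_partial_sum.
have mM K : measurable (running_max_ge a K).
  exact: cylinders_sigma_measurable (running_max_ge_block_sigma a (leqnn K)).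
suff M_le K : (K <= N)%N ->
    pr P (running_max_ge a K) <= 2 * pr P (running_max_ge a K `&` AN).
  have := M_le N (leqnn N); have : pr P (running_max_ge a N `&` AN) <= pr P AN.
    by apply: le_pr => //; exact: measurableI.
  lra.
elim: K => [|K IH] KN; first by rewrite running_max_ge0 set0I /pr measure0 /=; lra.
pose E := [set w | a <= `|S K.+1 w|] `\` running_max_ge a K.
have sE : <<s cylinders Xs (index_iota 0 K.+1) >> E.
  apply: (@measurableD _ (block_sigma Xs _)); last exact: running_max_ge_block_sigma.
  by apply: (@measurable_set_abs_ge _ (block_sigma Xs _)); exact: block_sigma_measurable_partial_sum.
have mE := cylinders_sigma_measurable sE.
have EM : E `&` running_max_ge a K = set0 by apply/seteqP; split=> // w [[_ ?]].
have EMA : E `&` AN `&` (running_max_ge a K `&` AN) = set0.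
  by rewrite setIACA EM set0I.
have -> : running_max_ge a K.+1 = E `|` running_max_ge a K.
  rewrite running_max_geS; apply/seteqP; split=> w; last by case=> [[]|]; [right|left].
  case=> [|Aw]; first by right.
  by have [|] := pselect (running_max_ge a K w); [right|left].
rewrite setIUl (pr_setU P mE (mM K) EM).
rewrite (pr_setU P (measurableI _ _ mE mAN) (measurableI _ _ (mM K) mAN) EMA).
have := levy_reflection KN sE (fun w => @proj1 _ _).
have := IH (ltnW KN).
lra.
Qed.

Lemma pr_abs_partial_sum_ge_le N n c : (N <= n)%N ->
  pr P [set w | c <= `|S N w|] <= 2 * pr P [set w | c <= `|S n w|].
Proof.
move=> Nn; have mS m : measurable [set w | c <= `|S m w|].
  exact/measurable_set_abs_ge/measurable_partial_sum.
have sF : <<s cylinders Xs (index_iota 0 N) >> [set w | c <= `|S N w|].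
  by apply: (@measurable_set_abs_ge _ (block_sigma Xs _)); exact: block_sigma_measurable_partial_sum.
have := levy_reflection Nn sF (fun w => id).
have : pr P ([set w | c <= `|S N w|] `&` [set w | c <= `|S n w|]) <=
       pr P [set w | c <= `|S n w|] by apply: le_pr => //; exact: measurableI.
lra.
Qed.

End levy_maximal_inequality.

Section extended_bounds.
Context (R : realType).
Local Open Scope ereal_scope.

Lemma Gext_sup_nat_le (G : R -> R) (A : set nat) (h : \bar R) :
  (forall x y, (0 <= x)%R -> (x <= y)%R -> (G x <= G y)%R) -> A 0%N ->
  (forall n, A n -> (G n%:R)%:E <= h) ->
  Gext G (ereal_sup [set n%:R%:E | n in A]) <= h.
Proof.
move=> G_nd A0 Ah; set E := [set _ | n in A].
have E_ub m : A m -> m%:R%:E <= ereal_sup E by move=> Am; apply: ereal_sup_ubound; exists m.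
case Es: (ereal_sup E) => [r| |] /=.
- (* a finite supremum of naturals is attained *)
  have : (r - 1)%:E < ereal_sup E by rewrite Es lte_fin; lra.
  case/ereal_sup_gt => _ [n An <-]; rewrite lte_fin => rn.
  suff -> : r = n%:R by exact: Ah.
  apply/eqP; rewrite eq_le -!lee_fin -Es E_ub // andbT.
  apply: ge_ereal_sup => _ [m Am <-]; rewrite lee_fin ler_nat -ltnS -(ltr_nat R).
  by have := E_ub m Am; rewrite Es lee_fin -natr1; lra.
- apply: ge_ereal_sup => _ [m _ <-].
  have : m%:R%:E < ereal_sup E by rewrite Es ltry.
  case/ereal_sup_gt => _ [n An <-]; rewrite lte_fin ltr_nat => mn.
  by apply: le_trans (Ah n An); rewrite lee_fin G_nd // ler_nat ltnW.
- by have := Ah 0%N A0; rewrite mulr0n.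
Qed.

Lemma Gext_sup_nat_ge0 (G : R -> R) (A : set nat) :
  (forall x, (0 <= x)%R -> (0 <= G x)%R) -> A 0%N ->
  0 <= Gext G (ereal_sup [set n%:R%:E | n in A]).
Proof.
move=> G_ge0 A0; have : 0 <= ereal_sup [set (n%:R : R)%:E | n in A].
  by apply: ereal_sup_ubound; exists 0%N; rewrite ?mulr0n.
case: ereal_sup => [r| |] //= r0; rewrite ?lee_fin ?G_ge0 //.
apply: (@le_trans _ _ (G 0%:R)%:E); first by rewrite lee_fin G_ge0.
by apply: ereal_sup_ubound; exists 0%N.
Qed.

Lemma nneseries_dyadic_blocks_le (u : nat -> \bar R) : (forall n, 0 <= u n) ->
  \sum_(0 <= j <oo) \sum_(2 ^ j.+1 <= n < 2 ^ j.+2) u n <= \sum_(1 <= n <oo) u n.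
Proof.
move=> u_ge0; apply: lime_le.
  by apply: is_cvg_nneseries => j _ _; apply: sume_ge0 => n _.
apply: nearW => J; rewrite /= [X in X <= _](_ : _ = \sum_(2 <= n < 2 ^ J.+1) u n).
  apply: le_trans (nneseries_lim_ge (2 ^ J.+1) _) => [|n _ _]; last exact: u_ge0.
  rewrite [X in _ <= X](@big_ltn _ _ _ 1) ?leeDr //.
  by rewrite (leq_trans _ (leq_pexp2l _ (ltn0Sn J))).
elim: J => [|J IH]; first by rewrite !big_geq.
rewrite big_nat_recr // IH -big_cat_nat // ?leq_pexp2l //.
by rewrite (leq_trans _ (leq_pexp2l _ (ltn0Sn J))).
Qed.

End extended_bounds.

(* The integral of a nonnegative function is a supremum over the simple
   functions below it, so no measurability is needed: L_1 is never shown to be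
   measurable. *)
Lemma ge0_le_integral_nonmeasurable d (T : measurableType d) (R : realType)
    (mu : {measure set T -> \bar R}) (f g : T -> \bar R) :
  (forall x, 0 <= f x)%E -> (forall x, f x <= g x)%E ->
  (\int[mu]_x f x <= \int[mu]_x g x)%E.
Proof.
move=> f_ge0 fg; rewrite !ge0_integralTE // => [|x]; last exact: le_trans (fg x).
by apply: ereal_sup_le => _ [h hf <-]; exists h => //= x; exact: le_trans (hf x) (fg x).
Qed.

Lemma integral_cst_add_series_indic d (T : measurableType d) (R : realType)
    (P : probability T R) (a : R) (c : nat -> R) (M : nat -> set T) :
  0 <= a -> (forall j, 0 <= c j) -> (forall j, measurable (M j)) ->
  (\int[P]_w (a%:E + \sum_(0 <= j <oo) (c j * \1_(M j) w)%:E) =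
   a%:E + \sum_(0 <= j <oo) (c j)%:E * P (M j))%E.
Proof.
move=> a_ge0 c_ge0 mM.
have term_ge0 j w : (0 <= (c j * \1_(M j) w)%:E)%E by rewrite lee_fin mulr_ge0 // indic_ge0.
have mterm j : measurable_fun setT (fun w => (c j * \1_(M j) w)%:E).
  by apply/measurable_EFinP; apply: measurable_funM.
rewrite ge0_integralD //; first last.
- by apply: ge0_emeasurable_sum => // j w _ _.
- by move=> w _; apply: nneseries_ge0.
rewrite integral_cst // [X in (_ * X + _)%E](_ : _ = 1%E); last exact: probability_setT.
rewrite mule1 integral_nneseries //.
congr (_ + _)%E; apply: eq_eseriesr => j _.
rewrite (integralZl_indic _ (fun _ => M j)) // ?integral_indic // ?setIT //.
by move=> cj0; have := c_ge0 j; rewrite leNgt cj0.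
Qed.

Section dyadic_blocks.
Context d (T : measurableType d) (R : realType) (P : probability T R) (G : R -> R).
Hypothesis G_nondecr : forall x y : R, 0 <= x -> x <= y -> G x <= G y.
Hypothesis G_ge0 : forall x : R, 0 <= x -> 0 <= G x.
Variable Xs : nat -> {RV P >-> R}.
Hypothesis Xs_indep : mutually_independent P (fun n => Xs n).
Hypothesis Xs_sym : forall i, symmetric_law P (Xs i).

Local Notation S := (partial_sum (fun n => Xs n)).

Let c j := G (2 ^ j.+1)%:R.
Let M j := running_max_ge Xs (2 ^ j)%:R (2 ^ j.+1).
Let Q n := [set w | 1 / 8 <= `|S n w / n%:R|].

Let c_ge0 j : 0 <= c j. Proof. exact: G_ge0. Qed.

Let measurable_M j : measurable (M j).
Proof. exact: cylinders_sigma_measurable (running_max_ge_block_sigma _ (leqnn _)). Qed.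

Let measurable_Q n : measurable (Q n).
Proof.
apply: measurable_set_abs_ge; apply: measurable_funM; first exact: measurable_partial_sum.
exact: measurable_cst.
Qed.

Lemma Gext_L1_le w : (Gext G (L1 (fun n => Xs n) w) <=
  (G 0)%:E + \sum_(0 <= j <oo) (c j * \1_(M j) w)%:E)%E.
Proof.
have term_ge0 j : (0 <= (c j * \1_(M j) w)%:E)%E by rewrite lee_fin mulr_ge0 // indic_ge0.
apply: Gext_sup_nat_le => //; first by left.
move=> n [->|[n0]]; first by rewrite mulr0n leeDl //; exact: nneseries_ge0.
rewrite ler_norm_divn // mul1r => Sn.
have /andP[lo hi] := trunc_log_bounds (isT : (1 < 2)%N) n0.
set j := trunc_log 2 n in lo hi.
have Mjw : M j w by exists n; [rewrite n0 ltnW|rewrite (le_trans _ Sn) // ler_nat].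
apply: (@le_trans _ _ (c j)%:E); first by rewrite lee_fin G_nondecr // ler_nat ltnW.
apply: le_trans (leeDr _ _); last by rewrite lee_fin G_ge0.
rewrite (nneseriesD1 _ (n:=j)) //= indicE mem_set // mulr1 leeDl //.
exact: nneseries_ge0.
Qed.

Lemma pr_running_max_le n j : (2 ^ j.+1 <= n < 2 ^ j.+2)%N -> pr P (M j) <= 4 * pr P (Q n).
Proof.
case/andP=> Nn n4; have n0 : (0 < n)%N := leq_trans (expn_gt0 2 j.+1) Nn.
have := levy_maximal Xs_indep Xs_sym (2 ^ j)%:R (2 ^ j.+1).
have := pr_abs_partial_sum_ge_le Xs_indep Xs_sym (2 ^ j)%:R Nn.
have n4' : n%:R <= 4 * (2 ^ j)%:R :> R.
  by rewrite -natrM ler_nat (_ : 4 * 2 ^ j = 2 ^ j.+2)%N ?(ltnW n4) // !expnS mulnA.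
have : pr P [set w | (2 ^ j)%:R <= `|S n w|] <= pr P (Q n).
  apply: le_pr => //; first exact/measurable_set_abs_ge/measurable_partial_sum.
  move=> w /= Sw; rewrite /Q /= ler_norm_divn //; apply: le_trans Sw.
  by have := ler0n R (2 ^ j); lra.
rewrite /M; lra.
Qed.

Lemma dyadic_block_le j : ((c j)%:E * P (M j) <=
  8%:E * \sum_(2 ^ j.+1 <= n < 2 ^ j.+2) ((n%:R)^-1 * G n%:R)%:E * P (Q n))%E.
Proof.
pose N := (2 ^ j.+1)%N; have N0 : 0 < N%:R :> R by rewrite ltr0n expn_gt0.
have term n : (N <= n < 2 ^ j.+2)%N ->
    c j * pr P (M j) / (8 * N%:R) <= (n%:R)^-1 * G n%:R * pr P (Q n).
  move=> /[dup] Nn2 /andP[Nn n2N].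
  have n0 : 0 < n%:R :> R by rewrite (lt_le_trans N0) // ler_nat.
  have nN : n%:R <= 2 * N%:R :> R by rewrite -natrM ler_nat -expnS ltnW.
  have cM : c j * pr P (M j) <= G n%:R * (4 * pr P (Q n)).
    by apply: ler_pM; rewrite ?pr_ge0 ?G_nondecr ?ler_nat ?pr_running_max_le.
  have GQ : 0 <= G n%:R * pr P (Q n) by rewrite mulr_ge0 ?pr_ge0 ?G_ge0.
  rewrite ler_pdivrMr ?mulr_gt0 //; apply: le_trans cM _.
  have -> : n%:R^-1 * G n%:R * pr P (Q n) * (8 * N%:R) =
      G n%:R * pr P (Q n) * (8 * N%:R / n%:R) by field; rewrite gt_eqF.
  have h4 : 4 <= 8 * N%:R / n%:R :> R by rewrite ler_pdivlMr //; lra.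
  by rewrite mulrA mulrAC; exact: ler_wpM2l GQ _ _ h4.
have blocks : c j * pr P (M j) / 8 <=
    \sum_(N <= n < 2 ^ j.+2) (n%:R)^-1 * G n%:R * pr P (Q n).
  apply: le_trans (ler_sum_nat term); rewrite sumr_const_nat.
  have -> : (2 ^ j.+2 - N = N)%N by rewrite /N expnS mul2n -addnn addnK.
  by rewrite -[_ *+ N]mulr_natr invfM mulrA mulfVK ?gt_eqF.
rewrite (prE P (measurable_M j)) -EFinM.
rewrite (eq_bigr (fun n => ((n%:R)^-1 * G n%:R * pr P (Q n))%:E)) => [|n _]; last first.
  by rewrite (prE P (measurable_Q n)) -EFinM.
by rewrite sumEFin -EFinM lee_fin; lra.
Qed.

Lemma expectation_Gext_L1_le : (\int[P]_w Gext G (L1 (fun n => Xs n) w)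
  <= (G 0)%:E + 8%:E * Ssum P (fun n => Xs n) G (1 / 8))%E.
Proof.
have u_ge0 n : (0 <= ((n%:R)^-1 * G n%:R)%:E * P (Q n))%E.
  by rewrite mule_ge0 ?measure_ge0 // lee_fin mulr_ge0 ?invr_ge0 ?G_ge0.
have L1_ge0 w : (0 <= Gext G (L1 (fun n => Xs n) w))%E.
  by apply: Gext_sup_nat_ge0 => //; left.
apply: le_trans; first exact: ge0_le_integral_nonmeasurable L1_ge0 Gext_L1_le.
rewrite integral_cst_add_series_indic ?G_ge0 // leeD2l //.
apply: le_trans.
  apply: lee_nneseries => [j _ _|j _]; last exact: dyadic_block_le.
  by rewrite mule_ge0 ?measure_ge0 ?lee_fin.
rewrite nneseriesZl; last by move=> j _; apply: sume_ge0 => n _.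
by rewrite lee_wpmul2l // nneseries_dyadic_blocks_le.
Qed.

End dyadic_blocks.

Theorem proposition3 (d : measure_display) (T : measurableType d) (R : realType)
  (P : probability T R) (G : R -> R)
  (G_nondecr : forall x y : R, 0 <= x -> x <= y -> G x <= G y)
  (G_ge0 : forall x : R, 0 <= x -> 0 <= G x)
  (X : {RV P >-> R}) (Xs : nat -> {RV P >-> R})
  (X_sym : symmetric_law P X)
  (Xs_law : forall n, same_law P (Xs n) X)
  (Xs_indep : mutually_independent P (fun n => Xs n)) :
  (\int[P]_w Gext G (L1 (fun n => Xs n) w)
     <= (G 0)%:E + 12%:E * Ssum P (fun n => Xs n) G (1 / 8))%E.
Proof.
have Xs_sym n : symmetric_law P (Xs n) := symmetric_law_same_law (Xs_law n) X_sym.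
apply: (le_trans (expectation_Gext_L1_le G_nondecr G_ge0 Xs_indep Xs_sym)).
rewrite leeD2l // lee_wpmul2r ?lee_fin //; last lra.
apply: nneseries_ge0 => n _ _; rewrite mule_ge0 ?measure_ge0 // lee_fin.
by rewrite mulr_ge0 ?invr_ge0 ?G_ge0.
Qed.
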